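(* Let $p=p_n\in(0,1)$ with $f_n:=n p_n\to 0$, and let $G\sim\mathcal{G}(n,p_n)$ with $m$ its number of edges. Let $\phi(\delta)=(1+\delta)\ln(1+\delta)-\delta$ for $\delta\ge 0$, and set $$\delta_n=\phi^{-1}\left(\frac{2\ln 2}{f_n}\right),\qquad C_n=\frac{1}{1+(1+\delta_n)\frac{n-1}{n}f_n}.$$ For $1\le u\le n$ define $$w_n(u)=\sum_{i=n-u}^{n}\binom{i}{i-(n-u)}(1-p_n)^{\binom{i-(n-u)}{2}}\,\mathbb{P}\left(m\ge\frac{n^2}{2u}-\frac{n}{2}\right),$$ and $\mathbb{T}^1(n,p)=\sum_{1\le u\le nC_n}w_n(u)$. Then $\mathbb{T}^1(n,p)$ has at most polynomial growth in $n$.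
   Context: $\mathcal{G}(n,p)$ is the binomial random graph on $n$ vertices in which each of the $\binom{n}{2}$ pairs of vertices is an edge with probability $p$, independently. $\phi$ is increasing on $[0,\infty)$, so $\phi^{-1}$ is well defined. The quantity $w_n(u)$ is the paper's bound on the expected number of nodes with potential $u$ in the best-first branch-and-bound search tree for maximum independent set (potential of a partial solution $S\subseteq\{v_1,\dots,v_i\}$ being $|S|+n-i$). *)

From HB Require Import structures.
From mathcomp Require Import all_boot all_order all_algebra.
From mathcomp Require Import all_classical all_reals all_analysis.
Set Implicit Arguments. Unset Strict Implicit. Unset Printing Implicit Defensive.
Import Order.TTheory GRing.Theory Num.Theory.
Local Open Scope ring_scope.

Definition is_graph (n : nat) (E : {set {set 'I_n}}) : bool :=
  [forall e in E, #|e| == 2%N].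

Definition Gnp_weight (R : realType) (n : nat) (p : R) (E : {set {set 'I_n}}) : R :=
  p ^+ #|E| * (1 - p) ^+ ('C(n, 2) - #|E|).

Definition prob_edges_ge (R : realType) (n : nat) (p t : R) : R :=
  \sum_(E : {set {set 'I_n}} | is_graph E && (t <= (#|E|)%:R)) Gnp_weight p E.

Definition phi (R : realType) (d : R) : R := (1 + d) * ln (1 + d) - d.

Definition Cn (R : realType) (n : nat) (p delta : R) : R :=
  1 / (1 + (1 + delta) * ((n%:R - 1) / n%:R) * (n%:R * p)).

Definition wn (R : realType) (n : nat) (p : R) (u : nat) : R :=
  \sum_((n - u)%N <= i < n.+1)
     ('C(i, i - (n - u)))%:R * (1 - p) ^+ 'C(i - (n - u), 2)
       * prob_edges_ge n p ((n%:R ^+ 2) / (2 * u%:R) - n%:R / 2).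

Definition T1 (R : realType) (n : nat) (p delta : R) : R :=
  \sum_(1 <= u < n.+1 | u%:R <= n%:R * Cn n p delta) wn n p u.

From HB Require Import structures.
From mathcomp Require Import all_boot all_order all_algebra.
From mathcomp Require Import all_classical all_reals all_analysis.
From mathcomp Require Import lra ring.
Set Implicit Arguments. Unset Strict Implicit. Unset Printing Implicit Defensive.
Import Order.TTheory GRing.Theory Num.Theory.
Import numFieldNormedType.Exports.
Local Open Scope ring_scope.

(* Each summand of [w_n(u)] is at most [2^n] times the tail [P(m >= t)], and
   the constraint [u <= n C_n] puts [t] above [(1 + delta_n) E m].  Chernoff's
   bound then gives [P(m >= t) <= exp (- E m * phi delta_n) = 2^(1-n)], since
   the choice of [delta_n] makes [E m * phi delta_n = (n-1) ln 2].  Hence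
   [w_n(u) <= 2 (n+1)] and [T^1(n,p) <= 2 n (n+1)] for every [n >= 1]. *)

Lemma bin_le_exp2 i k : ('C(i, k) <= 2 ^ i)%N.
Proof.
elim: i k => [|i IHi] [|k] //; first by rewrite bin0 expn_gt0.
by rewrite binS expnS mul2n -addnn leq_add.
Qed.

Section EdgeCount.
Variable R : realType.
Variables (n : nat) (p : R).
Hypothesis p_gt0 : 0 < p.
Hypothesis p_lt1 : p < 1.

Lemma Gnp_weight_ge0 (E : {set {set 'I_n}}) : 0 <= Gnp_weight p E.
Proof.
have q_ge0 : 0 <= 1 - p by rewrite subr_ge0 ltW.
by apply: mulr_ge0; apply: exprn_ge0; rewrite // ltW.
Qed.

Lemma prob_edges_ge_ge0 t : 0 <= prob_edges_ge n p t.
Proof. by apply: sumr_ge0 => E _; apply: Gnp_weight_ge0. Qed.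

Lemma is_graphE (E : {set {set 'I_n}}) :
  is_graph E = (E \subset [set e : {set 'I_n} | #|e| == 2%N]).
Proof.
apply/forall_inP/fintype.subsetP => [E2 e eE | E2 e eE]; first by rewrite inE E2.
by have := E2 e eE; rewrite inE.
Qed.

Lemma Gnp_edges_pgf (x : R) :
  \sum_(E : {set {set 'I_n}} | is_graph E) Gnp_weight p E * x ^+ #|E|
  = (1 - p + p * x) ^+ 'C(n, 2).
Proof.
set S := [set e : {set 'I_n} | #|e| == 2%N].
have cardS : #|S| = 'C(n, 2) by rewrite card_draws card_ord.
have cardE (E : {set {set 'I_n}}) : E \subset S -> (#|E| <= 'C(n, 2))%N.
  by move=> sES; rewrite -cardS subset_leq_card.
rewrite (partition_big (fun E : {set {set 'I_n}} => inord #|E| : 'I_('C(n, 2)).+1) xpredT) //=.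
rewrite exprDn; apply: eq_bigr => k _.
transitivity (\sum_(E in [set F : {set {set 'I_n}} | (F \subset S) && (#|F| == k)])
                (p * x) ^+ k * (1 - p) ^+ ('C(n, 2) - k)).
  apply: eq_big => E; last first.
    case/andP=> /[dup] gE; rewrite is_graphE => /cardE lek /eqP <-.
    by rewrite inordK ?ltnS // /Gnp_weight exprMn mulrAC.
  rewrite inE -is_graphE; case gE: (is_graph E) => //=.
  have lek := cardE _ (etrans (esym (is_graphE E)) gE).
  apply/eqP/eqP => [<-|Ek]; first by rewrite inordK.
  by apply: val_inj; rewrite /= Ek inordK.
by rewrite sumr_const cards_draws cardS mulrC.
Qed.

Lemma prob_edges_ge_chernoff (d t : R) :
  0 <= d -> (1 + d) * ('C(n, 2)%:R * p) <= t ->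
  prob_edges_ge n p t <= expR (- ('C(n, 2)%:R * p) * phi d).
Proof.
move=> d_ge0 mean_le_t.
have x_gt0 : 0 < 1 + d by lra.
have ln_ge0 : 0 <= ln (1 + d) by rewrite ln_ge0 // lerDl.
pose F (E : {set {set 'I_n}}) := Gnp_weight p E * (1 + d) ^+ #|E| * expR (- t * ln (1 + d)).
have F_ge0 E : 0 <= F E.
  by rewrite /F mulr_ge0 ?expR_ge0 // mulr_ge0 ?Gnp_weight_ge0 // exprn_ge0 // ltW.
have markov : prob_edges_ge n p t <= \sum_(E | is_graph E && (t <= #|E|%:R)) F E.
  apply: ler_sum => E /andP[_ tE]; rewrite /F -mulrA -[leLHS]mulr1.
  rewrite ler_wpM2l ?Gnp_weight_ge0 //.
  rewrite -{1}(lnK x_gt0) -expRM_natl -expRD.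
  apply: le_trans (expR_ge1Dx _); rewrite lerDl.
  by rewrite mulNr -mulrBl mulr_ge0 // subr_ge0.
have drop_tail : \sum_(E | is_graph E && (t <= #|E|%:R)) F E <= \sum_(E | is_graph E) F E.
  rewrite big_mkcond [leRHS]big_mkcond; apply: ler_sum => E _.
  by case: (is_graph E) => //=; case: (t <= _).
rewrite (le_trans markov) // (le_trans drop_tail) // -mulr_suml Gnp_edges_pgf.
have base_le : 1 - p + p * (1 + d) <= expR (p * d).
  by apply: le_trans (expR_ge1Dx _); lra.
apply: (@le_trans _ _ (expR (p * d) ^+ 'C(n, 2) * expR (- t * ln (1 + d)))).
  have pd_ge0 : 0 <= p * d by rewrite mulr_ge0 // ltW.
  by rewrite ler_wpM2r ?expR_ge0 // lerXn2r // nnegrE ?expR_ge0 //; lra.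
rewrite -expRM_natl -expRD ler_expR /phi.
have mean_ge0 : 0 <= 'C(n, 2)%:R * p by rewrite mulr_ge0 // ltW.
nra.
Qed.

End EdgeCount.

Section Estimates.
Variable R : realType.
Implicit Types (n u : nat) (q d : R).

Lemma bin2_natr n : 'C(n, 2)%:R = n%:R * (n%:R - 1) / 2 :> R.
Proof.
have twice : (2 * 'C(n, 2) = n * (n - 1))%N.
  by rewrite (mul_bin_left n 1) bin1 mulnC.
case: n twice => [|n] twice; first by rewrite bin_small // !mul0r.
have := congr1 (fun k => k%:R : R) twice; rewrite /= natrM natrM natrB // => <-.
by field.
Qed.

Lemma CnE n q d : (0 < n)%N -> Cn n q d = 1 / (1 + (1 + d) * (n%:R - 1) * q).
Proof.
move=> n_gt0; have n_neq0 : n%:R != 0 :> R by rewrite pnatr_eq0 -lt0n.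
by rewrite /Cn; congr (_ / (1 + _)); field.
Qed.

Lemma mean_le_edge_threshold n u q d : (0 < n)%N -> (0 < u)%N -> 0 <= q -> 0 <= d ->
  u%:R <= n%:R * Cn n q d ->
  (1 + d) * ('C(n, 2)%:R * q) <= n%:R ^+ 2 / (2 * u%:R) - n%:R / 2.
Proof.
move=> n_gt0 u_gt0 q_ge0 d_ge0; rewrite CnE // mul1r.
set D := 1 + _ * _ * _.
have n_ge1 : 1 <= n%:R :> R by rewrite ler1n.
have u_ge1 : 1 <= u%:R :> R by rewrite ler1n.
have D_gt0 : 0 < D.
  by rewrite /D ltr_pwDl ?mulr_ge0 // ?subr_ge0 //; lra.
rewrite ler_pdivlMr // => uD_le_n.
have -> : n%:R ^+ 2 / (2 * u%:R) - n%:R / 2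
          = (1 + d) * ('C(n, 2)%:R * q) + n%:R / (2 * u%:R) * (n%:R - u%:R * D).
  by rewrite bin2_natr /D; field; lra.
by rewrite lerDl mulr_ge0 ?subr_ge0 // divr_ge0 // mulr_ge0.
Qed.

Lemma mean_mul_phi_delta n q d : (0 < n)%N -> 0 < q -> phi d = 2 * ln 2 / (n%:R * q) ->
  'C(n, 2)%:R * q * phi d = (n%:R - 1) * ln 2.
Proof.
move=> n_gt0 q_gt0 ->; have n_gt0R : 0 < n%:R :> R by rewrite ltr0n.
by rewrite bin2_natr; field; rewrite !gt_eqF.
Qed.

Lemma pow2_prob_edges_ge_le2 n q d t : (0 < n)%N -> 0 < q < 1 -> 0 <= d ->
  phi d = 2 * ln 2 / (n%:R * q) -> (1 + d) * ('C(n, 2)%:R * q) <= t ->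
  2 ^+ n * prob_edges_ge n q t <= 2.
Proof.
move=> n_gt0 /andP[q_gt0 q_lt1] d_ge0 phi_d mean_le_t.
have two_gt0 : (0 : R) < 2 by [].
apply: (le_trans (ler_wpM2l (exprn_ge0 n (ltW two_gt0))
          (prob_edges_ge_chernoff q_gt0 q_lt1 d_ge0 mean_le_t))).
rewrite mulNr mean_mul_phi_delta // -{1}(lnK two_gt0) -expRM_natl -expRD.
by rewrite -mulrBl opprB addrC subrK mul1r lnK.
Qed.

Lemma wn_coef_le n i k j q : (i <= n)%N -> 0 <= q <= 1 ->
  ('C(i, k))%:R * (1 - q) ^+ j <= 2 ^+ n :> R.
Proof.
move=> le_in /andP[q_ge0 q_le1].
rewrite -[leRHS]mulr1 ler_pM ?ler0n ?exprn_ge0 ?exprn_ile1 ?subr_ge0 //; last by lra.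
by rewrite -natrX ler_nat (leq_trans (bin_le_exp2 _ _)) // leq_pexp2l.
Qed.

Lemma wn_le n u q d : (0 < n)%N -> (0 < u)%N -> 0 < q < 1 -> 0 <= d ->
  phi d = 2 * ln 2 / (n%:R * q) -> u%:R <= n%:R * Cn n q d ->
  wn n q u <= 2 * n.+1%:R.
Proof.
move=> n_gt0 u_gt0 /[dup] q01 /andP[q_gt0 q_lt1] d_ge0 phi_d u_le.
have mean_le_t := mean_le_edge_threshold n_gt0 u_gt0 (ltW q_gt0) d_ge0 u_le.
rewrite /wn; set t := _ - n%:R / 2.
apply: (@le_trans _ _ (\sum_((n - u)%N <= i < n.+1) 2 ^+ n * prob_edges_ge n q t)).
  apply: ler_sum_nat => i /andP[_ le_in].
  rewrite ler_wpM2r ?(prob_edges_ge_ge0 n q_gt0 q_lt1) // wn_coef_le //.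
  by rewrite !ltW.
have P_ge0 := prob_edges_ge_ge0 n q_gt0 q_lt1 t.
rewrite sumr_const_nat -[_ *+ _]mulr_natr; apply: ler_pM; rewrite ?mulr_ge0 ?exprn_ge0 //.
- exact: pow2_prob_edges_ge_le2 mean_le_t.
- by rewrite ler_nat leq_subr.
Qed.

Lemma T1_le n q d : (0 < n)%N -> 0 < q < 1 -> 0 <= d ->
  phi d = 2 * ln 2 / (n%:R * q) -> T1 n q d <= 4 * n%:R ^+ 2.
Proof.
move=> n_gt0 q01 d_ge0 phi_d.
apply: (@le_trans _ _ (\sum_(1 <= u < n.+1) 2 * n.+1%:R)).
  rewrite /T1 big_mkcond /=; apply: ler_sum_nat => u /andP[u_gt0 _].
  case: ifP => [u_le|_]; last by rewrite mulr_ge0.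
  exact: wn_le n_gt0 u_gt0 q01 d_ge0 phi_d u_le.
have n_ge1 : 1 <= n%:R :> R by rewrite ler1n.
rewrite sumr_const_nat subn1 /= -mulr_natr -addn1 natrD; nra.
Qed.

End Estimates.

Local Open Scope classical_set_scope.
Local Open Scope ring_scope.

Theorem proposition1 (R : realType) (p delta : nat -> R)
  (hp : forall n, 0 < p n < 1)
  (hf : (fun n : nat => n%:R * p n) @ \oo --> (0 : R))
  (hdelta0 : forall n, 0 <= delta n)
  (hdelta : forall n, phi (delta n) = 2 * ln 2 / (n%:R * p n)) :
  exists (K : R) (c : nat) (N : nat),
    forall n : nat, (N <= n)%N -> T1 n (p n) (delta n) <= K * n%:R ^+ c.
Proof. by exists 4, 2%N, 1%N => n n_gt0; apply: T1_le. Qed.
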